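(* Let $G,H$ be simple graphs, $k\in\mathbb N$, and let $\Phi$ be a level-$k$ quantum isomorphism map from $G$ to $H$. Then $\Phi(\boldsymbol F_GX)=\boldsymbol F_H\Phi(X)$ and $\Phi(X\boldsymbol F_G)=\Phi(X)\boldsymbol F_H$ for all $\boldsymbol F\in\mathcal Q_k$ and all $X\in\mathbb C^{V(G)^k\times V(G)^k}$.
   Context: Homomorphism tensors: for a $(k,k)$-bilabelled graph $\boldsymbol F=(F,\boldsymbol u,\boldsymbol v)$ ($\boldsymbol u,\boldsymbol v\in V(F)^k$), $\boldsymbol F_G\in\mathbb C^{V(G)^k\times V(G)^k}$ has $(\boldsymbol x,\boldsymbol y)$-entry the number of homomorphisms $h:F\to G$ with $h(u_i)=x_i$, $h(v_i)=y_i$. Bilabelled minors: via edge contraction, edge deletion, deletion of unlabelled vertices. $\boldsymbol C_k$: vertices $[2k]$, in-labels $(1,\dots,k)$, out-labels $(k+1,\dots,2k)$, edges $\{i,i+1\}$ ($i\in[2k]\setminus\{k,2k\}$), $\{1,k+1\},\{k,2k\}$; $\boldsymbol M_k$: same vertices/labels, edges $\{i,i+k\}$, $i\in[k]$. $\mathcal Q_k^P,\mathcal Q_k^S$ = bilabelled minors of $\boldsymbol C_k,\boldsymbol M_k$; $\mathcal Q_k$ their union. For $\sigma\in\mathfrak S_{2k}$, $(X^\sigma)_{\boldsymbol z}=X_{\boldsymbol w}$ with $w_{\sigma(i)}=z_i$ (index pairs viewed as $2k$-tuples). $\mathscr C_k$ = cyclic group of rotations of the cyclic sequence $(1,\dots,k,2k,\dots,k+1)$.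 A level-$k$ quantum isomorphism map from $G$ to $H$ is a linear $\Phi:\mathbb{C}^{V(G)^k\times V(G)^k}\to\mathbb{C}^{V(H)^k\times V(H)^k}$ that is completely positive, with $\Phi(\boldsymbol F_G\odot X)=\boldsymbol F_H\odot\Phi(X)$ for $\boldsymbol F\in\mathcal Q_k^P$ and all $X$ ($\odot$ entrywise), $\Phi(I)=I=\Phi^*(I)$, $\Phi(J)=J=\Phi^*(J)$ ($J$ all-ones, $\Phi^*$ the trace-inner-product adjoint), $\Phi(\boldsymbol F_G)=\boldsymbol F_H$ for all $\boldsymbol F\in\mathcal Q_k$, and $\Phi(X^\sigma)=\Phi(X)^\sigma$ for $\sigma\in\mathscr C_k$. *)

From HB Require Import structures.
From mathcomp Require Import all_boot all_order fingroup perm all_algebra.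
Set Implicit Arguments. Unset Strict Implicit. Unset Printing Implicit Defensive.
Import Order.TTheory GRing.Theory Num.Theory.
Local Open Scope ring_scope.

Notation idx V k := {ffun 'I_k -> V}.
Notation Mat C V k := {ffun (idx V k * idx V k) -> C}.

Section Mats.
Variables (C : numClosedFieldType) (V : finType) (k : nat).

Definition mmul (X Y : Mat C V k) : Mat C V k :=
  [ffun xz => \sum_(y : idx V k) X (xz.1, y) * Y (y, xz.2)].
Definition hprod (X Y : Mat C V k) : Mat C V k := [ffun xy => X xy * Y xy].
Definition idM : Mat C V k := [ffun xy => (xy.1 == xy.2)%:R].
Definition allones : Mat C V k := [ffun _ => 1].
Definition elemM (ab : idx V k * idx V k) : Mat C V k := [ffun xy => (xy == ab)%:R].
Definition tinner (A B : Mat C V k) : C := \sum_(xy : idx V k * idx V k) (A xy)^* * B xy.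

Definition join2 (x y : idx V k) (i : 'I_(k + k)) : V :=
  match split i with inl j => x j | inr j => y j end.
Definition unjoin2 (w : 'I_(k + k) -> V) : idx V k * idx V k :=
  ([ffun j => w (lshift k j)], [ffun j => w (rshift k j)]).

(* (X^sigma)_z = X_w where w_{sigma(i)} = z_i, i.e. w = z o sigma^-1 *)
Definition permM (s : {perm 'I_(k + k)}) (X : Mat C V k) : Mat C V k :=
  [ffun xy => X (unjoin2 (fun j => join2 xy.1 xy.2 ((s^-1)%g j)))].
End Mats.

(* Adjoint w.r.t. the trace inner product: <X, Phi^* Y> = <Phi X, Y>,
   so (Phi^* Y)_ab = <Phi E_ab, Y>. *)
Definition adjoint (C : numClosedFieldType) (VG VH : finType) (k : nat)
  (Phi : Mat C VG k -> Mat C VH k) (Y : Mat C VH k) : Mat C VG k :=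
  [ffun ab => tinner (Phi (elemM C ab)) Y].

Definition psd (C : numClosedFieldType) (I : finType) (M : I -> I -> C) : Prop :=
  (forall i j, M j i = (M i j)^*) /\
  (forall x : I -> C, 0 <= \sum_(i : I) \sum_(j : I) (x i)^* * M i j * x j).

(* complete positivity: id_m (x) Phi maps PSD block matrices to PSD ones, for every m.
   A block matrix in M_m(C^{V^k x V^k}) is Y : 'I_m -> 'I_m -> Mat, with rows/columns
   indexed by 'I_m * V^k. *)
Definition completely_positive (C : numClosedFieldType) (VG VH : finType) (k : nat)
  (Phi : Mat C VG k -> Mat C VH k) : Prop :=
  forall (m : nat) (Y : 'I_m -> 'I_m -> Mat C VG k),
    psd (fun (pa qb : 'I_m * idx VG k) => Y pa.1 qb.1 (pa.2, qb.2)) ->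
    psd (fun (pa qb : 'I_m * idx VH k) => Phi (Y pa.1 qb.1) (pa.2, qb.2)).

Definition linearP (C : numClosedFieldType) (VG VH : finType) (k : nat)
  (Phi : Mat C VG k -> Mat C VH k) : Prop :=
  forall (a : C) (X Y : Mat C VG k),
    Phi ([ffun xy => a * X xy] + Y) = [ffun xy => a * Phi X xy] + Phi Y.

Record bgraph (k : nat) := BGraph {
  bV : finType;
  bE : rel bV;            (* symmetric adjacency relation *)
  bin : 'I_k -> bV;
  bout : 'I_k -> bV
}.
Arguments bV {k} _.
Arguments bE {k} _.
Arguments bin {k} _.
Arguments bout {k} _.

Definition homT (C : numClosedFieldType) (k : nat) (F : bgraph k)
  (V : finType) (E : rel V) : Mat C V k :=
  [ffun xy : idx V k * idx V k =>
     #|[pred h : {ffun bV F -> V} |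
        [forall a, forall b, bE F a b ==> E (h a) (h b)] &&
        [forall i, (h (bin F i) == xy.1 i) && (h (bout F i) == xy.2 i)]]|%:R].

Section Minors.
Variables (k : nat) (F : bgraph k).

Definition del_edge (a b : bV F) : bgraph k :=
  @BGraph k (bV F)
    (fun x y => bE F x y && ~~ (((x == a) && (y == b)) || ((x == b) && (y == a))))
    (bin F) (bout F).

Definition del_vertex (a : bV F)
  (Hin : forall i, bin F i != a) (Hout : forall i, bout F i != a) : bgraph k :=
  @BGraph k {x : bV F | x != a}
    (fun x y => bE F (val x) (val y))
    (fun i => exist _ (bin F i) (Hin i))
    (fun i => exist _ (bout F i) (Hout i)).

Definition cmap (a b : bV F) (x : bV F) : bV F := if x == b then a else x.

Lemma cmap_neq (a b : bV F) (Hne : a != b) (x : bV F) : cmap a b x != b.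
Proof. rewrite /cmap; case: (x =P b) => [_|/eqP] //. Qed.

Definition contract (a b : bV F) (Hne : a != b) : bgraph k :=
  @BGraph k {x : bV F | x != b}
    (fun x y => [exists x0 : bV F, exists y0 : bV F,
       [&& cmap a b x0 == val x, cmap a b y0 == val y, bE F x0 y0 &
           ~~ (((x0 == a) && (y0 == b)) || ((x0 == b) && (y0 == a)))]])
    (fun i => exist _ (cmap a b (bin F i)) (cmap_neq Hne (bin F i)))
    (fun i => exist _ (cmap a b (bout F i)) (cmap_neq Hne (bout F i))).
End Minors.

Inductive minor_of (k : nat) (F0 : bgraph k) : bgraph k -> Prop :=
| mo_refl : minor_of F0 F0
| mo_del_edge (F : bgraph k) (a b : bV F) :
    bE F a b -> minor_of F0 F -> minor_of F0 (@del_edge k F a b)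
| mo_del_vertex (F : bgraph k) (a : bV F)
    (Hin : forall i, bin F i != a) (Hout : forall i, bout F i != a) :
    minor_of F0 F -> minor_of F0 (@del_vertex k F a Hin Hout)
| mo_contract (F : bgraph k) (a b : bV F) (Hne : a != b) :
    bE F a b -> minor_of F0 F -> minor_of F0 (@contract k F a b Hne).

(* C_k : vertices 0..2k-1 (paper's 1..2k shifted by one), in-labels 0..k-1,
   out-labels k..2k-1, edges {i,i+1} (i+1 <> k, 2k), {0,k}, {k-1,2k-1}. *)
Definition Ck_rel (k : nat) (i j : nat) : bool :=
  [|| (j == i.+1) && ((i.+1 < k) || ((k <= i) && (i.+1 < k + k)))%N,
      (0 < k)%N && (i == 0%N) && (j == k)
    | (0 < k)%N && (i == k.-1) && (j == (k + k).-1)].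

Definition Ck (k : nat) : bgraph k :=
  @BGraph k 'I_(k + k)
    (fun x y => Ck_rel k (val x) (val y) || Ck_rel k (val y) (val x))
    (fun i => lshift k i) (fun i => rshift k i).

Definition Mk_rel (k : nat) (i j : nat) : bool := (i < k)%N && (j == i + k)%N.

Definition Mk (k : nat) : bgraph k :=
  @BGraph k 'I_(k + k)
    (fun x y => Mk_rel k (val x) (val y) || Mk_rel k (val y) (val x))
    (fun i => lshift k i) (fun i => rshift k i).

Definition QP (k : nat) (F : bgraph k) : Prop := minor_of (Ck k) F.
Definition QS (k : nat) (F : bgraph k) : Prop := minor_of (Mk k) F.
Definition Q (k : nat) (F : bgraph k) : Prop := QP F \/ QS F.

(* 0-indexed position -> element of the cyclic sequence (0,..,k-1,2k-1,..,k) *)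
Definition cseq_nat (k i : nat) : nat := if (i < k)%N then i else ((k + k).-1 - (i - k))%N.
Definition cseq (k : nat) (i : 'I_(k + k)) : 'I_(k + k) := insubd i (cseq_nat k (val i)).

Definition rotation (k : nat) (s : {perm 'I_(k + k)}) : Prop :=
  exists r : nat, forall i j : 'I_(k + k),
    val j = ((val i + r) %% (k + k))%N -> s (cseq i) = cseq j.

Definition qiso_map (C : numClosedFieldType) (VG VH : finType) (EG : rel VG) (EH : rel VH)
  (k : nat) (Phi : Mat C VG k -> Mat C VH k) : Prop :=
  [/\ linearP Phi /\ completely_positive Phi,
      (forall F : bgraph k, QP F -> forall X : Mat C VG k,
          Phi (hprod (homT C F EG) X) = hprod (homT C F EH) (Phi X)),
      [/\ Phi (idM C VG k) = idM C VH k, adjoint Phi (idM C VH k) = idM C VG k,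
          Phi (allones C VG k) = allones C VH k & adjoint Phi (allones C VH k) = allones C VG k],
      (forall F : bgraph k, Q F -> Phi (homT C F EG) = homT C F EH) &
      (forall s : {perm 'I_(k + k)}, rotation s ->
          forall X : Mat C VG k, Phi (permM s X) = permM s (Phi X))].

(* A unital, trace-preserving, completely positive map Phi satisfies the
   Kadison-Schwarz inequality Phi(a a^* ) >= Phi(a) Phi(a)^*: the Gram block
   matrix of (I, a^*, X) is positive, hence so is its image under Phi, and with
   Phi(I) = I the Schur complement of the identity block is positive. If Phi
   preserves the Frobenius norm of a, the diagonal block of this complement has
   trace zero, so it vanishes together with the off-diagonal block
   Phi(a X) - Phi(a) Phi(X); taking adjoints gives the right-sided version.
   For F in Q_k we have Phi(F_G) = F_H, and the norm of F_G is preserved because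
   it is the entry sum of F_G o F_G, which Phi maps to F_H o F_H (Hadamard
   compatibility for Q^P, 0/1 entries for the fully labelled graphs in Q^S) and
   Phi^*(J) = J makes Phi preserve entry sums. *)

From Pilot Require Import Defs.
From HB Require Import structures.
From mathcomp Require Import all_boot all_order fingroup perm all_algebra.
From mathcomp Require Import ring.
Import Order.TTheory GRing.Theory Num.Theory.
Set Implicit Arguments. Unset Strict Implicit. Unset Printing Implicit Defensive.
Local Open Scope ring_scope.

Lemma sum_pair (R : nmodType) (I J : finType) (F : I * J -> R) :
  \sum_(ij : I * J) F ij = \sum_i \sum_j F (i, j).
Proof. by rewrite pair_bigA; apply: eq_bigr => -[]. Qed.

Lemma sum_mulr_delta (R : pzSemiRingType) (I : finType) (f : I -> R) (y : I) :
  \sum_i f i * (i == y)%:R = f y.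
Proof.
by under eq_bigr do rewrite mulr_natr mulrb; rewrite -big_mkcond big_pred1_eq.
Qed.

Local Notation i0 := (@Ordinal 3 0 isT).
Local Notation i1 := (@Ordinal 3 1 isT).
Local Notation i2 := (@Ordinal 3 2 isT).

Lemma sum_ord3 (R : nmodType) (F : 'I_3 -> R) : \sum_p F p = F i0 + F i1 + F i2.
Proof.
rewrite !big_ord_recl big_ord0 addr0 addrA.
by congr (F _ + F _ + F _); apply: val_inj.
Qed.

Section Matrices.
Variables (C : numClosedFieldType) (V : finType) (k : nat).
Implicit Types A B : Mat C V k.

Definition adjM A : Mat C V k := [ffun xy => (A (xy.2, xy.1))^*].

Lemma ffun_mul1l A : [ffun xy => 1 * A xy] = A.
Proof. by apply/ffunP => xy; rewrite ffunE mul1r. Qed.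

Lemma adjMK A : adjM (adjM A) = A.
Proof. by apply/ffunP => -[x y]; rewrite !ffunE /= conjCK. Qed.

Lemma adjM1 : adjM (idM C V k) = idM C V k.
Proof. by apply/ffunP => -[x y]; rewrite !ffunE conjC_nat eq_sym. Qed.

Lemma adjM_mmul A B : adjM (mmul A B) = mmul (adjM B) (adjM A).
Proof.
apply/ffunP => -[x y]; rewrite !ffunE rmorph_sum; apply: eq_bigr => z _.
by rewrite !ffunE rmorphM mulrC.
Qed.

Lemma mmul1l A : mmul (idM C V k) A = A.
Proof.
apply/ffunP => -[x y]; rewrite ffunE -[RHS](sum_mulr_delta (fun z => A (z, y))).
by apply: eq_bigr => z _; rewrite ffunE mulrC eq_sym.
Qed.

Lemma mmul1r A : mmul A (idM C V k) = A.
Proof.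
apply/ffunP => -[x y]; rewrite ffunE -[RHS](sum_mulr_delta (fun z => A (x, z))).
by apply: eq_bigr => z _; rewrite ffunE.
Qed.

Lemma tinnerC A B : tinner A B = (tinner B A)^*.
Proof.
rewrite rmorph_sum; apply: eq_bigr => xy _.
by rewrite rmorphM /= conjCK mulrC.
Qed.

Lemma tinner_adjM A B : tinner (adjM A) (adjM B) = tinner B A.
Proof.
rewrite /tinner !sum_pair exchange_big; apply: eq_bigr => y _; apply: eq_bigr => x _.
by rewrite !ffunE /= conjCK mulrC.
Qed.

Lemma tinner_idM A : tinner (idM C V k) A = \sum_x A (x, x).
Proof.
rewrite /tinner sum_pair; apply: eq_bigr => x _.
rewrite -[RHS](sum_mulr_delta (fun y => A (x, y))).
by apply: eq_bigr => y _; rewrite ffunE conjC_nat mulrC eq_sym.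
Qed.

Lemma tinner_allones A : tinner (allones C V k) A = \sum_xy A xy.
Proof. by apply: eq_bigr => xy _; rewrite ffunE conjC1 mul1r. Qed.

Lemma tinner_idM_mmul_adjM A : tinner (idM C V k) (mmul A (adjM A)) = tinner A A.
Proof.
rewrite tinner_idM /tinner sum_pair; apply: eq_bigr => x _; rewrite ffunE.
by apply: eq_bigr => y _; rewrite ffunE mulrC.
Qed.

Lemma elemM_expand A : A = \sum_ab [ffun xy => A ab * elemM C ab xy].
Proof.
apply/ffunP => xy; rewrite sum_ffunE -[LHS](sum_mulr_delta A).
by apply: eq_bigr => ab _; rewrite !ffunE eq_sym.
Qed.

Lemma psd_gram m (w : 'I_m -> Mat C V k) :
  psd (fun pa qb : 'I_m * idx V k => mmul (adjM (w pa.1)) (w qb.1) (pa.2, qb.2)).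
Proof.
split=> [[p a] [q b]|u] /=.
  rewrite !ffunE rmorph_sum; apply: eq_bigr => c _.
  by rewrite !ffunE rmorphM /= conjCK mulrC.
pose s c := \sum_(j : 'I_m * idx V k) w j.1 (c, j.2) * u j.
have -> : \sum_i \sum_j (u i)^* * mmul (adjM (w i.1)) (w j.1) (i.2, j.2) * u j
    = \sum_c (s c)^* * s c.
  under eq_bigr do under eq_bigr do rewrite ffunE mulr_sumr mulr_suml.
  under eq_bigr do rewrite exchange_big.
  rewrite exchange_big; apply: eq_bigr => c _.
  rewrite /s rmorph_sum !mulr_suml; apply: eq_bigr => i _.
  rewrite mulr_sumr; apply: eq_bigr => j _.
  by rewrite ffunE rmorphM /=; ring.
by apply: sumr_ge0 => c _; rewrite mulrC mul_conjC_ge0.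
Qed.

End Matrices.

Section LinearMaps.
Variables (C : numClosedFieldType) (VG VH : finType) (k : nat).
Variable Phi : Mat C VG k -> Mat C VH k.
Hypothesis Phi_lin : Defs.linearP Phi.
Implicit Types X Y : Mat C VG k.

Lemma PhiD X Y : Phi (X + Y) = Phi X + Phi Y.
Proof. by have := Phi_lin 1 X Y; rewrite !ffun_mul1l. Qed.

Lemma Phi0 : Phi 0 = 0.
Proof. by apply: (@addrI _ (Phi 0)); rewrite -PhiD !addr0. Qed.

Lemma PhiZ a X : Phi [ffun xy => a * X xy] = [ffun xy => a * Phi X xy].
Proof. by have := Phi_lin a X 0; rewrite !addr0 Phi0 addr0. Qed.

Lemma Phi_sum (I : finType) (F : I -> Mat C VG k) : Phi (\sum_i F i) = \sum_i Phi (F i).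
Proof. exact: (big_morph Phi PhiD Phi0). Qed.

Lemma Phi_elemM_expand X xy : Phi X xy = \sum_ab X ab * Phi (elemM C ab) xy.
Proof.
rewrite {1}(elemM_expand X) Phi_sum sum_ffunE.
by apply: eq_bigr => ab _; rewrite PhiZ ffunE.
Qed.

Lemma tinner_adjoint X (Y : Mat C VH k) : tinner (Phi X) Y = tinner X (adjoint Phi Y).
Proof.
rewrite /tinner; under eq_bigr do rewrite Phi_elemM_expand rmorph_sum mulr_suml.
rewrite exchange_big; apply: eq_bigr => ab _; rewrite ffunE mulr_sumr.
by apply: eq_bigr => xy _; rewrite rmorphM mulrA.
Qed.

Lemma tinner_adjointl (Y : Mat C VH k) X : tinner Y (Phi X) = tinner (adjoint Phi Y) X.
Proof. by rewrite tinnerC tinner_adjoint -tinnerC. Qed.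

End LinearMaps.

Section CompletelyPositiveMaps.
Variables (C : numClosedFieldType) (VG VH : finType) (k : nat).
Variable Phi : Mat C VG k -> Mat C VH k.
Hypothesis Phi_cp : completely_positive Phi.

Lemma psd_Phi_gram m (w : 'I_m -> Mat C VG k) :
  psd (fun pa qb : 'I_m * idx VH k => Phi (mmul (adjM (w pa.1)) (w qb.1)) (pa.2, qb.2)).
Proof. by apply: (@Phi_cp m (fun p q => mmul (adjM (w p)) (w q))); apply: psd_gram. Qed.

Lemma Phi_adjM X : Phi (adjM X) = adjM (Phi X).
Proof.
pose w (p : 'I_2) := [:: idM C VG k; X]`_p.
have [herm _] := psd_Phi_gram w.
apply/ffunP => -[b a]; have := herm (@Ordinal 2 0 isT, a) (@Ordinal 2 1 isT, b).
by rewrite /= adjM1 mmul1l mmul1r ffunE.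
Qed.

End CompletelyPositiveMaps.

Lemma psd2_offdiag_eq0 (C : numClosedFieldType) (d e r : C) :
  (forall c t : C, 0 <= c^* * (c * d + t * e) + t^* * (c * e^* + t * r)) ->
  d = 0 -> e = 0.
Proof.
move=> form d0; subst d.
have r_ge0 : 0 <= r.
  by have := form 0 1; rewrite rmorph0 rmorph1 !mul0r !add0r !mul1r.
have r1_real : (r + 1)^* = r + 1.
  by rewrite rmorphD rmorph1 /= (conj_Creal (ger0_real r_ge0)).
have := form (r + 1) (- e^*); rewrite r1_real rmorphN /= conjCK.
have -> : (r + 1) * ((r + 1) * 0 + - e^* * e) + - e * ((r + 1) * e^* + - e^* * r)
    = - ((r + 2) * (e * e^*)) by ring.
rewrite oppr_ge0 => le0.
have r2_gt0 : 0 < r + 2 by rewrite ltr_wpDl.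
have : (r + 2) * (e * e^*) == 0.
  by rewrite eq_le le0 mulr_ge0 ?mul_conjC_ge0 ?ltW.
by rewrite mulf_eq0 gt_eqF //= mul_conjC_eq0 => /eqP.
Qed.

Section SchurComplement.
Variables (C : numClosedFieldType) (T : finType).
Variable P : 'I_3 -> 'I_3 -> {ffun T * T -> C}.
Hypothesis P_psd : psd (fun pa qb : 'I_3 * T => P pa.1 qb.1 (pa.2, qb.2)).
Hypothesis P00 : forall a b, P i0 i0 (a, b) = (a == b)%:R.

Definition schur_compl p q a b := P p q (a, b) - \sum_c P p i0 (a, c) * P i0 q (c, b).

Lemma block_herm p q a b : P q p (b, a) = (P p q (a, b))^*.
Proof. exact: (P_psd.1 (p, a) (q, b)). Qed.

Lemma schur_complC p q a b : (schur_compl p q a b)^* = schur_compl q p b a.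
Proof.
rewrite rmorphB rmorph_sum /= -block_herm; congr (_ - _).
by apply: eq_bigr => c _; rewrite rmorphM /= -!block_herm mulrC.
Qed.

Lemma schur_compl0l q a b : schur_compl i0 q a b = 0.
Proof.
rewrite /schur_compl -[P i0 q (a, b)](sum_mulr_delta (fun c => P i0 q (c, b))).
by rewrite -sumrB big1 // => c _; rewrite P00 mulrC eq_sym subrr.
Qed.

Lemma schur_compl_form_ge0 y c c0 t :
  0 <= c0^* * (c0 * schur_compl i1 i1 y y + t * schur_compl i1 i2 y c) +
       t^* * (c0 * (schur_compl i1 i2 y c)^* + t * schur_compl i2 i2 c c).
Proof.
pose z (pa : 'I_3 * T) := [:: - (c0 * P i0 i1 (pa.2, y) + t * P i0 i2 (pa.2, c));
                              c0 * (pa.2 == y)%:R; t * (pa.2 == c)%:R]`_pa.1.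
have Pz p a : \sum_j P p j.1 (a, j.2) * z j =
              c0 * schur_compl p i1 a y + t * schur_compl p i2 a c.
  rewrite sum_pair sum_ord3 /=.
  under eq_bigr do rewrite mulrN mulrDr [_ * (c0 * _)]mulrCA [_ * (t * _)]mulrCA.
  under [X in _ + X + _]eq_bigr do rewrite mulrCA.
  under [X in _ + X]eq_bigr do rewrite mulrCA.
  rewrite sumrN big_split /= -!mulr_sumr !sum_mulr_delta /schur_compl.
  by ring.
have := P_psd.2 z.
have -> : \sum_i \sum_j (z i)^* * P i.1 j.1 (i.2, j.2) * z j =
          \sum_i (z i)^* * \sum_j P i.1 j.1 (i.2, j.2) * z j.
  by apply: eq_bigr => i _; rewrite mulr_sumr; apply: eq_bigr => j _; rewrite mulrA.
rewrite sum_pair; under eq_bigr do under eq_bigr do rewrite Pz.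
rewrite sum_ord3 /= big1 ?add0r => [|a _]; last first.
  by rewrite !schur_compl0l !mulr0 addr0 mulr0.
under eq_bigr do rewrite rmorphM /= conjC_nat mulrAC.
under [X in _ + X]eq_bigr do rewrite rmorphM /= conjC_nat mulrAC.
by rewrite !sum_mulr_delta schur_complC.
Qed.

Hypothesis schur_compl_trace0 : \sum_y schur_compl i1 i1 y y = 0.

Lemma schur_compl12_eq0 y c : schur_compl i1 i2 y c = 0.
Proof.
have diag_ge0 y' : 0 <= schur_compl i1 i1 y' y'.
  have := schur_compl_form_ge0 y' y' 1 0.
  by rewrite rmorph1 rmorph0 !mul0r !mul1r !addr0.
apply: (psd2_offdiag_eq0 (schur_compl_form_ge0 y c)).
exact: (psumr_eq0P (P := predT) (fun y' _ => diag_ge0 y')).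
Qed.

End SchurComplement.

Section MultiplicativeDomain.
Variables (C : numClosedFieldType) (VG VH : finType) (k : nat).
Variable Phi : Mat C VG k -> Mat C VH k.
Hypotheses (Phi_lin : Defs.linearP Phi) (Phi_cp : completely_positive Phi).
Hypothesis Phi_unital : Phi (idM C VG k) = idM C VH k.
Hypothesis Phi_trace : adjoint Phi (idM C VH k) = idM C VG k.

Lemma Phi_mmull a X : tinner (Phi a) (Phi a) = tinner a a ->
  Phi (mmul a X) = mmul (Phi a) (Phi X).
Proof.
move=> a_isometric.
pose w (p : 'I_3) := [:: idM C VG k; adjM a; X]`_p.
pose P p q := Phi (mmul (adjM (w p)) (w q)).
have P_psd : psd (fun pa qb : 'I_3 * idx VH k => P pa.1 qb.1 (pa.2, qb.2)).
  exact: psd_Phi_gram.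
have P00 x y : P i0 i0 (x, y) = (x == y)%:R.
  by rewrite /P /= adjM1 mmul1l Phi_unital ffunE.
have P01 : P i0 i1 = adjM (Phi a) by rewrite /P /= adjM1 mmul1l (Phi_adjM Phi_cp).
have P02 : P i0 i2 = Phi X by rewrite /P /= adjM1 mmul1l.
have P10 : P i1 i0 = Phi a by rewrite /P /= adjMK mmul1r.
have P11 : P i1 i1 = Phi (mmul a (adjM a)) by rewrite /P /= adjMK.
have P12 : P i1 i2 = Phi (mmul a X) by rewrite /P /= adjMK.
have trace0 : \sum_y schur_compl P i1 i1 y y = 0.
  apply/eqP; rewrite /schur_compl sumrB subr_eq0 P11 P10 P01; apply/eqP.
  rewrite -tinner_idM tinner_adjointl //.
  rewrite Phi_trace tinner_idM_mmul_adjM -a_isometric -tinner_idM_mmul_adjM tinner_idM.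
  by apply: eq_bigr => y _; rewrite ffunE.
apply/ffunP => -[y c]; have := schur_compl12_eq0 P_psd P00 trace0 y c.
rewrite /schur_compl P12 P10 P02 => /eqP; rewrite subr_eq0 => /eqP ->.
by rewrite ffunE.
Qed.

Lemma Phi_mmulr a X : tinner (Phi a) (Phi a) = tinner a a ->
  Phi (mmul X a) = mmul (Phi X) (Phi a).
Proof.
move=> a_isometric.
have adja_isometric : tinner (Phi (adjM a)) (Phi (adjM a)) = tinner (adjM a) (adjM a).
  by rewrite (Phi_adjM Phi_cp) !tinner_adjM.
rewrite -[LHS]adjMK -(Phi_adjM Phi_cp) adjM_mmul Phi_mmull // !(Phi_adjM Phi_cp).
by rewrite -adjM_mmul adjMK.
Qed.

End MultiplicativeDomain.

Definition fully_labelled k (F : bgraph k) : Prop :=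
  forall v : bV F, exists i, v = bin F i \/ v = bout F i.

Lemma QS_fully_labelled k (F : bgraph k) : QS F -> fully_labelled F.
Proof.
elim=> [|? ? ? _ _ IH|? ? ? ? _ IH|? ? ? ? _ _ IH] v.
- by rewrite -(splitK v); case: (split v) => j; exists j; [left|right].
- exact: IH v.
- have [i [vi|vi]] := IH (val v); exists i; [left|right]; exact: val_inj.
- have [i [vi|vi]] := IH (val v); exists i; [left|right]; apply: val_inj;
  by rewrite /= /cmap -vi (negPf (valP v)).
Qed.

Section HomomorphismTensors.
Variables (C : numClosedFieldType) (k : nat) (F : bgraph k) (V : finType) (E : rel V).

Lemma tinner_homT :
  tinner (homT C F E) (homT C F E) = \sum_xy hprod (homT C F E) (homT C F E) xy.
Proof. by apply: eq_bigr => xy _; rewrite !ffunE conjC_nat. Qed.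

Lemma hprod_homT_fully_labelled :
  fully_labelled F -> hprod (homT C F E) (homT C F E) = homT C F E.
Proof.
move=> labelled; apply/ffunP => xy; rewrite !ffunE.
set A := [pred h : {ffun bV F -> V} | _ ].
have : (#|A| <= 1)%N.
  apply/card_le1_eqP => h1 h2.
  rewrite !inE => /andP[_ /forallP h1xy] /andP[_ /forallP h2xy].
  apply/ffunP => v; have [i [->|->]] := labelled v;
  by move: (h1xy i) (h2xy i) => /andP[/eqP in1 /eqP out1] /andP[/eqP in2 /eqP out2];
  rewrite ?in1 ?in2 ?out1 ?out2.
by case: #|A| => [|[|n]] // _; rewrite ?mul0r ?mul1r.
Qed.

End HomomorphismTensors.

Theorem lemma3p5 (C : numClosedFieldType) (VG VH : finType)
  (EG : rel VG) (EH : rel VH)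
  (EG_sym : symmetric EG) (EG_irr : irreflexive EG)
  (EH_sym : symmetric EH) (EH_irr : irreflexive EH)
  (k : nat) (Phi : Mat C VG k -> Mat C VH k) :
  qiso_map EG EH Phi ->
  forall F : bgraph k, Q F -> forall X : Mat C VG k,
    Phi (mmul (homT C F EG) X) = mmul (homT C F EH) (Phi X) /\
    Phi (mmul X (homT C F EG)) = mmul (Phi X) (homT C F EH).
Proof.
move=> [[Phi_lin Phi_cp] Phi_hprod [Phi_unital Phi_trace _ Phi_adjJ] Phi_homT _] F QF X.
have PhiF := Phi_homT F QF.
have PhiFF : Phi (hprod (homT C F EG) (homT C F EG)) = hprod (homT C F EH) (homT C F EH).
  case: QF => [QPF|/QS_fully_labelled labelled]; first by rewrite Phi_hprod // PhiF.
  by rewrite !hprod_homT_fully_labelled.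
have F_isometric : tinner (Phi (homT C F EG)) (Phi (homT C F EG)) =
                   tinner (homT C F EG) (homT C F EG).
  by rewrite PhiF !tinner_homT -!tinner_allones -PhiFF tinner_adjointl // Phi_adjJ.
rewrite -PhiF; split.
- exact: (Phi_mmull Phi_lin Phi_cp Phi_unital Phi_trace).
- exact: (Phi_mmulr Phi_lin Phi_cp Phi_unital Phi_trace).
Qed.
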